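(* Let $q_0$ be a probability distribution on $\mathcal X_1$ and, for each $h<H$ and $(x_h,a_h)\in\mathcal A(\mathcal X_h)$, let $q_h(\cdot|x_h,a_h)$ be a probability distribution on $\mathcal X_{h+1}(x_h,a_h)$; set $q_{1:h}(x_h)=q_0(x_1)\prod_{h'=1}^{h-1}q_{h'}(x_{h'+1}|x_{h'},a_{h'})$ along the history of $x_h$. Then $$\sum_{h=1}^H\sum_{x_h\in\mathcal X_h}A(x_h)\frac{q_{1:h}(x_h)}{p^\star_{1:h}(x_h)}=A_{\mathcal X}.$$ Moreover, if $A(x)=A$ for all $x\in\mathcal X$, then for every $h\in[H]$, $$\sum_{x_h\in\mathcal X_h}A(x_h)\frac{q_{1:h}(x_h)}{p^\star_{1:h}(x_h)}\le A^{h-H}A_{\mathcal X}.$$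
   Context: The max-player's information sets form a finite set $\mathcal X=\bigsqcup_{h=1}^H\mathcal X_h$ with perfect recall: each $x_h\in\mathcal X_h$ has a unique history $(x_1,a_1,\dots,x_{h-1},a_{h-1},x_h)$ with $x_i\in\mathcal X_i$, $a_i\in\mathcal A(x_i)$, where $\mathcal A(x)$ is a finite nonempty action set of size $A(x)$. For $h<H$, $\mathcal X_{h+1}(x_h,a_h)$ is the set of $x_{h+1}\in\mathcal X_{h+1}$ whose history contains $(x_h,a_h)$, assumed nonempty. $\mathcal A(\mathcal X_h)=\{(x_h,a_h):x_h\in\mathcal X_h,a_h\in\mathcal A(x_h)\}$, $A_{\mathcal X}=\sum_{x\in\mathcal X}A(x)$. Write $x'\ge x$ if $x'=x$ or $x$ appears in the history of $x'$. Balanced transitions: $A^\tau(x)=\sum_{x'\ge x}A(x')$; $p^\star_0(x_1)=A^\tau(x_1)/A_{\mathcal X}$ for $x_1\in\mathcal X_1$; $p^\star_h(x_{h+1}|x_h,a_h)=A^\tau(x_{h+1})/\sum_{x'\in\mathcal X_{h+1}(x_h,a_h)}A^\tau(x')$; $p^\star_{1:h}(x_h)=p^\star_0(x_1)\prod_{h'=1}^{h-1}p^\star_{h'}(x_{h'+1}|x_{h'},a_{h'})$ along the history of $x_h$. *)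

From HB Require Import structures.
From mathcomp Require Import all_boot all_order all_algebra.
Set Implicit Arguments. Unset Strict Implicit. Unset Printing Implicit Defensive.
Import Order.TTheory GRing.Theory Num.Theory.
Local Open Scope ring_scope.

(* X : finite type of information sets; lvl x = h means x \in X_h;
   Aset x : the (finite) action set A(x), a subset of a global finite type Act;
   par x = None if x is at level 1, and par x = Some (y, a) if the history
   of x ends with (y, a), i.e. x \in X_{h+1}(y, a).  *)

Definition nA (X Act : finType) (Aset : X -> {set Act}) (x : X) : nat :=
  #|Aset x|.

Definition AX (X Act : finType) (Aset : X -> {set Act}) : nat :=
  (\sum_(x : X) nA Aset x)%N.

Fixpoint anc (X Act : finType) (par : X -> option (X * Act)) (k : nat) (x : X)
  : option X :=
  match k with
  | 0 => Some x
  | k'.+1 => obind (fun y => omap fst (par y)) (anc par k' x)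
  end.

Definition desc (X Act : finType) (par : X -> option (X * Act)) (x x' : X) : bool :=
  [exists k : 'I_#|X|.+1, anc par k x' == Some x].

Definition Atau (X Act : finType) (Aset : X -> {set Act})
  (par : X -> option (X * Act)) (x : X) : nat :=
  (\sum_(x' | desc par x x') nA Aset x')%N.

Fixpoint path_prob (R : ringType) (X Act : finType) (par : X -> option (X * Act))
  (p0 : X -> R) (p : X -> Act -> X -> R) (n : nat) (x : X) : R :=
  match n with
  | 0 => 0
  | n'.+1 => match par x with
             | None => p0 x
             | Some (y, a) => p y a x * path_prob par p0 p n' y
             end
  end.

(* p_{1:h}(x_h) = p_0(x_1) prod_{h'} p_{h'}(x_{h'+1} | x_{h'}, a_{h'}),
   h = lvl x (fuel lvl x suffices since the history has lvl x nodes) *)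
Definition reach (R : ringType) (X Act : finType) (lvl : X -> nat)
  (par : X -> option (X * Act)) (p0 : X -> R) (p : X -> Act -> X -> R) (x : X) : R :=
  path_prob par p0 p (lvl x) x.

Definition pstar0 (R : fieldType) (X Act : finType) (Aset : X -> {set Act})
  (par : X -> option (X * Act)) (x : X) : R :=
  (Atau Aset par x)%:R / (AX Aset)%:R.

Definition pstar (R : fieldType) (X Act : finType) (Aset : X -> {set Act})
  (par : X -> option (X * Act)) (y : X) (a : Act) (x : X) : R :=
  (Atau Aset par x)%:R /
    (\sum_(x' | par x' == Some (y, a)) (Atau Aset par x')%:R).

Definition pstar_reach (R : fieldType) (X Act : finType) (lvl : X -> nat)
  (Aset : X -> {set Act}) (par : X -> option (X * Act)) (x : X) : R :=
  reach lvl par (@pstar0 R X Act Aset par) (@pstar R X Act Aset par) x.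

From HB Require Import structures.
From mathcomp Require Import all_boot all_order all_algebra.
From mathcomp Require Import zify ring.
Set Implicit Arguments. Unset Strict Implicit. Unset Printing Implicit Defensive.
Import Order.TTheory GRing.Theory Num.Theory.
Local Open Scope ring_scope.

(* Write r(x) = q_{1:h}(x) / p*_{1:h}(x) and A^tau(x) for the number of
   actions in the subtree of x.  The proof is a flow argument on the tree.
   - Subtree weights satisfy A^tau(x) = A(x) + sum over children c of A^tau(c)
     (sum_desc, Atau_rec); for uniform action sets A^tau(x) >= A^(H-h+1).
   - A child c reached by action a from x has p*(c|x,a) = A^tau(c) / S_a with
     S_a the weight of all a-children, hence A^tau(c) r(c) = q(c|x,a) S_a r(x);
     since q(.|x,a) sums to one, A^tau(x) r(x) = A(x) r(x) + sum over children
     of A^tau(c) r(c) (children_flow, weighted_Atau_rec).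
   - Summing over a level, the level masses M_h = sum_{x in X_h} A^tau(x) r(x)
     satisfy M_h = T_h + M_{h+1}, where T_h is the h-th summand of the theorem;
     M_1 = A_X and M_{H+1} = 0, so the T_h telescope to A_X and M_h <= A_X.
   - With A(x) = A we get T_h <= A^{h-H} M_h <= A^{h-H} A_X. *)

Section Descendants.
Variables (X Act : finType) (lvl : X -> nat) (par : X -> option (X * Act)).
Hypothesis lvl_par : forall x y a, par x = Some (y, a) -> lvl x = (lvl y).+1.
Hypothesis par_root : forall x, (par x == None) = (lvl x == 1%N).

Definition pnode (c : X) : option X := omap fst (par c).

Lemma lvl_pnode c x : pnode c = Some x -> lvl c = (lvl x).+1.
Proof. by rewrite /pnode; case E: (par c) => [[y a]|] //= [<-]; apply: lvl_par E. Qed.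

Lemma pnode_root c : pnode c = None -> lvl c = 1%N.
Proof.
rewrite /pnode; case E: (par c) => [[y a]|] //= _.
by apply/eqP; rewrite -par_root E.
Qed.

(* Levels start at 1: a level-0 node would need a parent of level -1. *)
Lemma lvl_gt0 x : (0 < lvl x)%N.
Proof.
case E: (pnode x) => [y|]; first by rewrite (lvl_pnode E).
by rewrite (pnode_root E).
Qed.

Lemma ancS k x : anc par k.+1 x = obind pnode (anc par k x).
Proof. by []. Qed.

Lemma anc_lvl k x y : anc par k x = Some y -> (lvl y + k)%N = lvl x.
Proof.
elim: k x y => [|k IH] x y; first by case=> ->; rewrite addn0.
rewrite ancS; case E: (anc par k x) => [c|] //= /lvl_pnode Hc.
by have := IH _ _ E; lia.
Qed.

Lemma anc_some k x : (k < lvl x)%N -> exists y, anc par k x = Some y.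
Proof.
elim: k => [|k IH] Hk; first by exists x.
have [c Ec] := IH (ltnW Hk); rewrite ancS Ec /=.
case Ep: (pnode c) => [y|]; first by exists y.
by have := anc_lvl Ec; rewrite (pnode_root Ep); lia.
Qed.

(* The ancestors of x are distinct, which bounds the depth of the tree; this
   makes the bounded search in the definition of desc exhaustive. *)
Lemma lvl_le_card x : (lvl x <= #|X|)%N.
Proof.
pose f (i : 'I_(lvl x)) := odflt x (anc par i x).
suff /leq_card : injective f by rewrite card_ord.
move=> i j; rewrite /f.
have [yi Ei] := anc_some (ltn_ord i); have [yj Ej] := anc_some (ltn_ord j).
rewrite Ei Ej /= => eij; subst yj.
by have := anc_lvl Ei; have := anc_lvl Ej => ? ?; apply: val_inj => /=; lia.
Qed.

Lemma descP x x' : reflect (exists k, anc par k x' = Some x) (desc par x x').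
Proof.
apply: (iffP existsP) => [[k /eqP E]|[k E]]; first by exists k.
have Hk : (k < #|X|.+1)%N.
  by have := anc_lvl E; have := lvl_le_card x'; have := lvl_gt0 x; lia.
by exists (Ordinal Hk); rewrite E.
Qed.

Lemma desc_refl x : desc par x x.
Proof. by apply/descP; exists 0%N. Qed.

Lemma desc_child x x' :
  (desc par x x' && (x' != x)) = [exists c, (pnode c == Some x) && desc par c x'].
Proof.
apply/andP/existsP => [[/descP [[|k] E] ne]|[c /andP [/eqP Ec /descP [k Ek]]]].
- by case: E ne => ->; rewrite eqxx.
- move: E; rewrite ancS; case E: (anc par k x') => [c|] //= Ec.
  by exists c; rewrite Ec eqxx /=; apply/descP; exists k.
- have := anc_lvl Ek; have := lvl_pnode Ec => ? ?; split.
    by apply/descP; exists k.+1; rewrite ancS Ek.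
  by apply/eqP => exx; subst x'; lia.
Qed.

Lemma desc_child_uniq x x' c1 c2 : pnode c1 = Some x -> pnode c2 = Some x ->
  desc par c1 x' -> desc par c2 x' -> c1 = c2.
Proof.
move=> E1 E2 /descP [k1 F1] /descP [k2 F2].
have ek : k1 = k2.
  by have := anc_lvl F1; have := anc_lvl F2; rewrite (lvl_pnode E1) (lvl_pnode E2); lia.
by subst k2; move: F1; rewrite F2 => -[].
Qed.

Lemma sum_desc (V : nmodType) (F : X -> V) x :
  \sum_(x' | desc par x x') F x' =
  F x + \sum_(c | pnode c == Some x) \sum_(x' | desc par c x') F x'.
Proof.
rewrite (bigD1 x) ?desc_refl //=; congr (_ + _).
rewrite (exchange_big_dep (fun x' => desc par x x' && (x' != x))) /=; last first.
  by move=> c x' Hc Hd; rewrite desc_child; apply/existsP; exists c; rewrite Hc.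
apply: eq_bigr => x' Hx'.
move: (Hx'); rewrite desc_child => /existsP [c0 /andP [Hc0 Hd0]].
rewrite (big_pred1 c0) // => c /=; apply/andP/eqP => [[/eqP Hc Hd]|-> //].
exact: desc_child_uniq Hc (eqP Hc0) Hd Hd0.
Qed.

Lemma sum_next_level (V : nmodType) (F : X -> V) h : (0 < h)%N ->
  \sum_(x | lvl x == h) \sum_(c | pnode c == Some x) F c =
  \sum_(c | lvl c == h.+1) F c.
Proof.
move=> h_gt0.
rewrite [RHS](partition_big (fun c => odflt c (pnode c)) (fun x => lvl x == h)).
  apply: eq_bigr => x /eqP Hx; apply: eq_bigl => c.
  case E: (pnode c) => [y|] /=; rewrite ?(lvl_pnode E) ?(pnode_root E).
    by apply/eqP/andP => [[->]|[_ /eqP ->]] //; rewrite Hx.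
  by apply/esym/andP => -[/eqP]; lia.
move=> c /eqP Hc; case E: (pnode c) => [y|] /=.
  by have := lvl_pnode E; rewrite Hc => -[->].
by have := pnode_root E; lia.
Qed.

End Descendants.

Section ActionCounts.
Variables (X Act : finType) (lvl : X -> nat).
Variables (Aset : X -> {set Act}) (par : X -> option (X * Act)).
Hypothesis lvl_par : forall x y a, par x = Some (y, a) -> lvl x = (lvl y).+1.
Hypothesis par_root : forall x, (par x == None) = (lvl x == 1%N).
Hypothesis par_action : forall x y a, par x = Some (y, a) -> a \in Aset y.
Hypothesis Aset_neq0 : forall x, Aset x != set0.

Lemma Atau_rec x :
  Atau Aset par x = (nA Aset x + \sum_(c | pnode par c == Some x) Atau Aset par c)%N.
Proof. exact: (sum_desc lvl_par par_root). Qed.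

Lemma nA_gt0 x : (0 < nA Aset x)%N.
Proof. by rewrite /nA card_gt0. Qed.

Lemma Atau_gt0 x : (0 < Atau Aset par x)%N.
Proof. by rewrite Atau_rec ltn_addr ?nA_gt0. Qed.

Lemma sum_children_by_action (V : nmodType) (G : X -> V) x :
  \sum_(c | pnode par c == Some x) G c =
  \sum_(a in Aset x) \sum_(c | par c == Some (x, a)) G c.
Proof.
rewrite (exchange_big_dep (fun c => pnode par c == Some x)) /=; last first.
  by move=> a c _ /eqP; rewrite /pnode => ->.
apply: eq_bigr => c; rewrite /pnode.
case E: (par c) => [[y b]|] //= /eqP [Ey]; subst y.
rewrite (big_pred1 b) ?(par_action E) // => a /=.
by apply/andP/eqP => [[_ /eqP [->]]|->]; rewrite ?(par_action E).
Qed.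

Lemma Atau_uniform_lb (H A : nat) :
  (forall x, (lvl x <= H)%N) -> (forall x, nA Aset x = A) ->
  (forall y a, (lvl y < H)%N -> a \in Aset y -> exists x, par x = Some (y, a)) ->
  forall x, (A ^ (H - lvl x).+1 <= Atau Aset par x)%N.
Proof.
move=> lvl_le uniform child x.
suff: forall n x, (H - lvl x)%N = n -> (A ^ n.+1 <= Atau Aset par x)%N by apply.
elim=> [|n IH] {}x Hn.
  by rewrite expn1 -(uniform x) Atau_rec leq_addr.
have Hx : (lvl x < H)%N by lia.
rewrite Atau_rec sum_children_by_action expnS -{1}(uniform x) /nA -sum1_card big_distrl.
rewrite /= -[X in (X <= _)%N]add0n leq_add //; apply: leq_sum => a Ha; rewrite mul1n.
have [c Ec] := child x a Hx Ha.
rewrite (bigD1 c) ?Ec //=; apply: leq_trans (leq_addr _ _); apply: IH.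
by have := lvl_par Ec; lia.
Qed.

End ActionCounts.

Section ReachProbability.
Variables (X Act : finType) (lvl : X -> nat) (par : X -> option (X * Act)).
Hypothesis lvl_par : forall x y a, par x = Some (y, a) -> lvl x = (lvl y).+1.
Hypothesis par_root : forall x, (par x == None) = (lvl x == 1%N).

Lemma reach_child (R : nzRingType) (p0 : X -> R) p c x a : par c = Some (x, a) ->
  reach lvl par p0 p c = p x a c * reach lvl par p0 p x.
Proof. by move=> E; rewrite /reach (lvl_par E) /= E. Qed.

Lemma reach_root (R : nzRingType) (p0 : X -> R) p x : lvl x = 1%N ->
  reach lvl par p0 p x = p0 x.
Proof. by move=> E; rewrite /reach E /=; move: (par_root x); rewrite E eqxx => /eqP ->. Qed.

Lemma path_prob_ge0 (R : numDomainType) (p0 : X -> R) p n x :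
  (forall x, par x = None -> 0 <= p0 x) ->
  (forall x y a, par x = Some (y, a) -> 0 <= p y a x) ->
  0 <= path_prob par p0 p n x.
Proof.
move=> p0_ge0 p_ge0; elim: n x => [|n IH] x //=.
by case E: (par x) => [[y a]|]; [rewrite mulr_ge0 ?(p_ge0 _ _ _ E) | exact: p0_ge0].
Qed.

End ReachProbability.

(* The field identity behind both ratio computations: a weight b cancels
   against a transition probability of the form b / s. *)
Lemma weight_cancel (F : fieldType) (b s u v w : F) : b != 0 ->
  b * ((u * v) / ((b / s) * w)) = u * s * (v / w).
Proof.
move=> b_neq0; rewrite invfM invf_div.
transitivity (b / b * (u * s * (v / w))); first by ring.
by rewrite mulfV // mul1r.
Qed.

Section BalancedRatio.
Variables (R : numFieldType) (X Act : finType) (H : nat) (lvl : X -> nat).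
Variables (Aset : X -> {set Act}) (par : X -> option (X * Act)).
Hypothesis lvl_le : forall x, (lvl x <= H)%N.
Hypothesis par_root : forall x, (par x == None) = (lvl x == 1%N).
Hypothesis par_step : forall x y a, par x = Some (y, a) ->
  a \in Aset y /\ lvl x = (lvl y).+1.
Hypothesis Aset_neq0 : forall x, Aset x != set0.
Hypothesis child_exists : forall y a, (lvl y < H)%N -> a \in Aset y ->
  exists x, par x = Some (y, a).
Variables (q0 : X -> R) (q : X -> Act -> X -> R).
Hypothesis q0_distr : (forall x, lvl x = 1%N -> 0 <= q0 x) /\
  \sum_(x | lvl x == 1%N) q0 x = 1.
Hypothesis q_distr : forall y a, (lvl y < H)%N -> a \in Aset y ->
  (forall x, par x = Some (y, a) -> 0 <= q y a x) /\
  \sum_(x | par x == Some (y, a)) q y a x = 1.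

Let lvl_par x y a (E : par x = Some (y, a)) : lvl x = (lvl y).+1 := (par_step E).2.
Let par_action x y a (E : par x = Some (y, a)) : a \in Aset y := (par_step E).1.

Local Notation At x := ((Atau Aset par x)%:R : R).

Definition ratio (x : X) : R := reach lvl par q0 q x / pstar_reach R lvl Aset par x.

Lemma Atau_neq0 x : At x != 0.
Proof. by rewrite pnatr_eq0 -lt0n (Atau_gt0 lvl_par par_root). Qed.

(* Since p*(c|x,a) = A^tau(c) / S_a, the weight A^tau(c) cancels. *)
Lemma ratio_child c x a : par c = Some (x, a) ->
  At c * ratio c = q x a c * (\sum_(c' | par c' == Some (x, a)) At c') * ratio x.
Proof.
move=> E; rewrite /ratio /pstar_reach !(reach_child lvl_par _ _ E) /pstar.
exact/weight_cancel/Atau_neq0.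
Qed.

(* At level one p*_0(x) = A^tau(x) / A_X, so A^tau(x) r(x) = q_0(x) A_X. *)
Lemma ratio_root x : lvl x = 1%N -> At x * ratio x = q0 x * (AX Aset)%:R.
Proof.
move=> E; rewrite /ratio /pstar_reach !(reach_root par_root) // /pstar0.
by rewrite invf_div mulrCA [At x * _]mulrCA mulfV ?Atau_neq0 ?mulr1.
Qed.

(* The key identity: the weighted ratio mass flowing into the children of x
   equals their total weight times the ratio at x, because for every action
   the q-probabilities of the children sum to one. *)
Lemma children_flow x :
  \sum_(c | pnode par c == Some x) At c * ratio c =
  (\sum_(c | pnode par c == Some x) At c) * ratio x.
Proof.
have [Hx|Hx] := ltnP (lvl x) H; last first.
  rewrite !big_pred0 ?mul0r // => c;
  by apply/negbTE/eqP => /(lvl_pnode lvl_par); have := lvl_le c; lia.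
rewrite !(sum_children_by_action par_action) big_distrl; apply: eq_bigr => a Ha.
rewrite (eq_bigr _ (fun c E => ratio_child (eqP E))) -!big_distrl /=.
by rewrite (q_distr Hx Ha).2 mul1r.
Qed.

Lemma weighted_Atau_rec x : At x * ratio x =
  (nA Aset x)%:R * ratio x + \sum_(c | pnode par c == Some x) At c * ratio c.
Proof. by rewrite children_flow -mulrDl (Atau_rec Aset lvl_par par_root) natrD natr_sum. Qed.

Definition level_mass (h : nat) : R := \sum_(x | lvl x == h) At x * ratio x.
Definition level_term (h : nat) : R :=
  \sum_(x | lvl x == h) (nA Aset x)%:R * ratio x.

Lemma level_mass_step h : (0 < h)%N ->
  level_mass h = level_term h + level_mass h.+1.
Proof.
move=> h_gt0; rewrite /level_mass (eq_bigr _ (fun x _ => weighted_Atau_rec x)).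
by rewrite big_split /= (sum_next_level lvl_par par_root).
Qed.

(* The first level carries mass A_X because q_0 is a distribution ... *)
Lemma level_mass_first : level_mass 1 = (AX Aset)%:R.
Proof.
rewrite /level_mass (eq_bigr _ (fun x E => ratio_root (eqP E))).
by rewrite -big_distrl /= q0_distr.2 mul1r.
Qed.

Lemma level_mass_beyond : level_mass H.+1 = 0.
Proof. by rewrite /level_mass big_pred0 // => x; apply/negbTE; have := lvl_le x; lia. Qed.

Lemma sum_level_terms m n : (0 < m <= n)%N ->
  \sum_(m <= h < n) level_term h = level_mass m - level_mass n.
Proof.
case/andP=> m_gt0 le_mn; rewrite addrC -[X in _ + X]opprK.
apply: (telescope_sumr_eq (fun h => - level_mass h)) => // h /andP [le_mh _].
by rewrite (level_mass_step (leq_trans m_gt0 le_mh)) opprK addrC addrK.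
Qed.

Lemma weighted_sum_total :
  \sum_(1 <= h < H.+1) level_term h = (AX Aset)%:R.
Proof. by rewrite sum_level_terms // level_mass_first level_mass_beyond subr0. Qed.

Lemma ratio_ge0 x : 0 <= ratio x.
Proof.
apply: divr_ge0; apply: path_prob_ge0.
- by move=> y /eqP; rewrite par_root => /eqP; apply: q0_distr.1.
- move=> y z a E; have lt_zH : (lvl z < H)%N by have := lvl_le y; rewrite (lvl_par E).
  exact: (q_distr lt_zH (par_action E)).1 _ E.
- by move=> y _; rewrite /pstar0 divr_ge0 ?ler0n.
- by move=> y z a _; rewrite /pstar divr_ge0 ?sumr_ge0 // => *; rewrite ler0n.
Qed.

(* Since all summands are nonnegative, no level mass exceeds A_X. *)
Lemma level_mass_le h : (0 < h)%N -> level_mass h <= (AX Aset)%:R.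
Proof.
move=> h_gt0; rewrite -subr_ge0 -level_mass_first -sum_level_terms ?h_gt0 //.
apply: sumr_ge0 => i _.
by apply: sumr_ge0 => x _; rewrite mulr_ge0 ?ler0n ?ratio_ge0.
Qed.

(* For uniform action sets, A(x) <= A^(h-H) A^tau(x) on level h. *)
Lemma level_term_uniform_le (A : nat) h : (forall x, nA Aset x = A) ->
  level_term h <= A%:R ^- (H - h) * level_mass h.
Proof.
move=> uniform; rewrite /level_term /level_mass mulr_sumr.
apply: ler_sum => x /eqP <-; rewrite [leRHS]mulrA; apply: (ler_wpM2r (ratio_ge0 x)).
have A_gt0 : (0 < A)%N by rewrite -(uniform x) nA_gt0.
rewrite ler_pdivlMl ?exprn_gt0 ?ltr0n // uniform -natrX -natrM ler_nat -expnSr.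
exact: (Atau_uniform_lb lvl_par par_root par_action lvl_le uniform child_exists).
Qed.

Lemma level_term_uniform_bound (A : nat) h : (forall x, nA Aset x = A) ->
  (0 < h)%N -> level_term h <= A%:R ^- (H - h) * (AX Aset)%:R.
Proof.
move=> uniform h_gt0; apply: le_trans (level_term_uniform_le h uniform) _.
by apply: ler_wpM2l; rewrite ?invr_ge0 ?exprn_ge0 ?ler0n ?level_mass_le.
Qed.

End BalancedRatio.

Theorem mainTheorem7 (R : realFieldType) (X Act : finType) (H : nat)
  (lvl : X -> nat) (Aset : X -> {set Act}) (par : X -> option (X * Act))
  (* tree structure with perfect recall *)
  (Hlvl : forall x, (1 <= lvl x <= H)%N)
  (Hroot : forall x, (par x == None) = (lvl x == 1%N))
  (Hpar : forall x y a, par x = Some (y, a) ->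
            a \in Aset y /\ lvl x = (lvl y).+1)
  (HAne : forall x, Aset x != set0)
  (Hchild : forall y a, (lvl y < H)%N -> a \in Aset y ->
            exists x, par x = Some (y, a))
  (* the transitions q *)
  (q0 : X -> R) (q : X -> Act -> X -> R)
  (Hq0 : (forall x, lvl x = 1%N -> 0 <= q0 x) /\
         \sum_(x | lvl x == 1%N) q0 x = 1)
  (Hq : forall y a, (lvl y < H)%N -> a \in Aset y ->
         (forall x, par x = Some (y, a) -> 0 <= q y a x) /\
         \sum_(x | par x == Some (y, a)) q y a x = 1) :
  \sum_(1 <= h < H.+1) \sum_(x | lvl x == h)
      (nA Aset x)%:R * (reach lvl par q0 q x / pstar_reach R lvl Aset par x)
    = (AX Aset)%:R
  /\
  (forall A : nat, (forall x, nA Aset x = A) ->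
   forall h : nat, (1 <= h <= H)%N ->
     \sum_(x | lvl x == h)
        (nA Aset x)%:R * (reach lvl par q0 q x / pstar_reach R lvl Aset par x)
       <= (A%:R ^- (H - h)%N) * (AX Aset)%:R).
Proof.
have lvl_le x : (lvl x <= H)%N by case/andP: (Hlvl x).
split; first exact: (weighted_sum_total lvl_le Hroot Hpar HAne Hq0 Hq).
move=> A uniform h /andP [h_gt0 _].
exact: (level_term_uniform_bound lvl_le Hroot Hpar HAne Hchild Hq0 Hq uniform h_gt0).
Qed.
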